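(* Let $1<p<\infty$, $1/p-1<\gamma<1/p$, and $\{\lambda_n\}_{n=1}^\infty\in\mathrm{GBV}$. Then there is a constant $C$ depending only on $M(\lambda)$, $p$ and $\gamma$ such that $$\sum_{n=1}^\infty n^{p+p\gamma-2}\Big(\sum_{k=n}^\infty|\lambda_k-\lambda_{k+1}|\Big)^p\le C\sum_{n=1}^\infty n^{p+p\gamma-2}\lambda_n^p .$$
   Context: $\Delta c_n:=c_n-c_{n+1}$. A sequence $\mathbf c=\{c_n\}_{n=1}^\infty$ belongs to the class $\mathrm{GBV}$ if $c_n\ge 0$ for all $n$, $c_n\to 0$ as $n\to\infty$, and there is a positive constant $M(\mathbf c)$ depending only on $\mathbf c$ such that $\sum_{n=m}^{2m}|\Delta c_n|\le M(\mathbf c)\,c_m$ for all $m=1,2,\dots$. *)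

From mathcomp Require Import all_boot all_order all_algebra.
From mathcomp Require Import all_classical all_reals all_analysis.
Set Implicit Arguments. Unset Strict Implicit. Unset Printing Implicit Defensive.
Import Order.TTheory GRing.Theory Num.Theory.
Import numFieldNormedType.Exports.
Local Open Scope classical_set_scope.
Local Open Scope ring_scope.

(* Sequences are indexed by nat; the value at index 0 is irrelevant
   (the paper's sequences start at n = 1). *)

Definition GBV_with {R : realType} (c : nat -> R) (M : R) : Prop :=
  [/\ (forall n, (0 < n)%N -> 0 <= c n),
      c @ \oo --> (0 : R) &
      (forall m, (0 < m)%N ->
         \sum_(m <= n < (2 * m).+1) `|c n - c n.+1| <= M * c m)].

Definition GBV {R : realType} (c : nat -> R) : Prop :=
  exists M : R, 0 < M /\ GBV_with c M.

(* Write d_k = |lambda_k - lambda_(k+1)|.  Each k >= 1 lies in the windows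
   [m, 2m] for all m in [k/2, k], whose weights 1/m add up to at least 1/2, so
   the GBV condition gives  sum_(k>=n) d_k <= 2M sum_(2m>=n) lambda_m / m.
   Jensen's inequality with weights m^(-r-1), r = b/(p-1), whose sum over
   2m >= n is O(n^(-r)), turns this into
     (sum_(k>=n) d_k)^p <= C n^(-b) sum_(2m>=n) lambda_m^p m^(b-1),
   where 2b - 1 = p + p gamma - 2, so that b > 0 exactly when gamma > 1/p - 1.
   Multiplying by n^(2b-1), summing over n and exchanging the two sums leaves
   sum_(n<=2m) n^(b-1) = O(m^b) as the coefficient of lambda_m^p m^(b-1),
   which restores the weight m^(2b-1). *)

From mathcomp Require Import all_boot all_order all_algebra.
From mathcomp Require Import all_classical all_reals all_analysis.
From mathcomp Require Import lra ring zify.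
Import Order.TTheory GRing.Theory Num.Theory.
Import numFieldNormedType.Exports.
Local Open Scope ring_scope.

Section FiniteSums.
Context {R : realType}.

Lemma powR_Bernoulli (x y c : R) : 0 <= x -> x <= y -> 0 < c ->
  x `^ c * (y + c * (y - x)) <= y `^ c * y.
Proof.
move=> x0 xy c0.
have [->|xn0] := eqVneq x 0.
  by rewrite powR0 ?gt_eqF// mul0r mulr_ge0 ?powR_ge0// (le_trans x0).
have xp : 0 < x by rewrite lt_neqAle eq_sym xn0.
have yp : 0 < y by apply: lt_le_trans xy.
(* with t := (y - x) / y: x ^ c <= y ^ c * e ^ (- c t), and e ^ (c t) >= 1 + c t *)
set t := (y - x) / y.
have t0 : 0 <= t by rewrite divr_ge0 ?subr_ge0// ltW.
have t1 : t < 1 by rewrite /t ltr_pdivrMr// mul1r ltrBlDr ltrDl.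
have t1' : 0 < 1 - t by rewrite subr_gt0.
have xE : x = y * (1 - t).
  by rewrite /t mulrBr mulr1 mulrCA divff ?gt_eqF// mulr1 opprB addrC subrK.
have ln_x : ln x <= ln y - t by rewrite xE lnM ?posrE// lerD2l le_ln1Dx// ltrN2.
have pow_x : x `^ c <= y `^ c * expR (- (c * t)).
  rewrite /powR (gt_eqF xp) (gt_eqF yp) -expRD ler_expR -mulrN -mulrDr.
  by rewrite ler_pM2l.
have -> : y + c * (y - x) = (1 + c * t) * y.
  by rewrite /t mulrDl mul1r -mulrA divfK ?gt_eqF.
rewrite mulrA; apply: ler_wpM2r; first exact: ltW.
apply: (le_trans (ler_wpM2r _ pow_x)); first by rewrite addr_ge0// mulr_ge0// ltW.
rewrite -mulrA ler_piMr ?powR_ge0// expRN ler_pdivrMl ?expR_gt0// mulr1.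
exact: expR_ge1Dx.
Qed.

Lemma sum_powR_nat_le (b : R) N : 0 < b ->
  \sum_(1 <= n < N.+1) n%:R `^ (b - 1) <= (1 + b^-1) * N%:R `^ b.
Proof.
move=> b0; elim: N => [|N IH]; first by rewrite big_geq// powR0 ?gt_eqF// mulr0.
rewrite big_nat_recr//=.
set y : R := N.+1%:R; set A := N%:R `^ b in IH *; set B := y `^ b.
have y1 : 1 <= y by rewrite /y ler1n.
have y0 : 0 < y by lra.
have A0 : 0 <= A by apply: powR_ge0.
have B0 : 0 <= B by apply: powR_ge0.
have AB : A * (y + b) <= B * y.
  have Ny : N%:R <= y by rewrite ler_nat.
  have := @powR_Bernoulli N%:R y b (ler0n _ _) Ny b0.
  have -> : y - N%:R = 1 by rewrite /y -natr1 addrAC subrr add0r.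
  by rewrite mulr1.
have -> : y `^ (b - 1) = B / y.
  by rewrite powRB ?powRr1 ?(ltW y0)// (gt_eqF y0) implybT.
rewrite [X in _ <= X](_ : _ = (1 + b^-1) * A + (1 + b^-1) * (B - A)); last by ring.
apply: lerD => //.
rewrite ler_pdivrMr// -subr_ge0.
have -> : (1 + b^-1) * (B - A) * y - B =
    (y * (b + 1) * (B * y - A * (y + b)) + B * (b * b) * (y - 1)) / (b * (y + b)).
  by field; rewrite ?gt_eqF//; lra.
apply: divr_ge0; last by rewrite mulr_ge0//; lra.
by apply: addr_ge0; apply: mulr_ge0; rewrite ?mulr_ge0//; lra.
Qed.

Lemma sum_inv_powR_nat_le (r : R) (N K : nat) : 0 < r -> (0 < N)%N ->
  \sum_(N <= m < K) (m%:R `^ r * m%:R)^-1 <= (1 + r^-1) * (N%:R `^ r)^-1.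
Proof.
move=> r0 N0.
set T := fun m : nat => (m%:R `^ r * m%:R : R)^-1.
set g := fun m : nat => (m%:R `^ r : R)^-1.
have T0 m : 0 <= T m by rewrite /T invr_ge0 mulr_ge0 ?powR_ge0.
have T_le m : (0 < m)%N -> T m.+1 <= r^-1 * (g m - g m.+1).
  move=> m0; rewrite /T /g.
  set a := m%:R `^ r; set b := m.+1%:R `^ r; set y : R := m.+1%:R.
  have y0 : 0 < y by rewrite ltr0n.
  have a0 : 0 < a by rewrite powR_gt0// ltr0n.
  have b0 : 0 < b by apply: powR_gt0.
  have ab : a * (y + r) <= b * y.
    have my : m%:R <= y by rewrite ler_nat.
    have := @powR_Bernoulli m%:R y r (ler0n _ _) my r0.
    have -> : y - m%:R = 1 by rewrite /y -natr1 addrAC subrr add0r.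
    by rewrite mulr1.
  rewrite -subr_ge0.
  have -> : r^-1 * (a^-1 - b^-1) - (b * y)^-1 = (b * y - a * y - r * a) / (r * a * b * y).
    by field; rewrite ?gt_eqF//; lra.
  by apply: divr_ge0; [lra | rewrite !mulr_ge0// ltW].
have [KN|NK] := leqP K N.
  rewrite big_geq// mulr_ge0// ?invr_ge0 ?powR_ge0//.
  by rewrite addr_ge0// invr_ge0 ltW.
case: K NK => // K NK.
rewrite big_nat_recl// mulrDl mul1r lerD// -/(g N).
  by rewrite /T /g lef_pV2 ?posrE ?mulr_gt0 ?powR_gt0 ?ltr0n// ler_peMr ?powR_ge0// ler1n.
(* telescoping against (g m - g m.+1) / r *)
apply: (@le_trans _ _ (\sum_(N <= m < K) r^-1 * (g m - g m.+1))).
  by apply: ler_sum_nat => m /andP[Hm _]; apply: T_le; apply: leq_trans N0 Hm.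
rewrite -mulr_sumr.
have -> : \sum_(N <= m < K) (g m - g m.+1) = g N - g K.
  by under eq_bigr do rewrite -opprB; rewrite sumrN telescope_sumr// opprB.
by rewrite ler_wpM2l ?invr_ge0 ?(ltW r0)// gerBl /g invr_ge0 powR_ge0.
Qed.

Lemma ler_sum_nat_sub (f : nat -> R) a b c d (P Q : pred nat) :
  (forall k, 0 <= f k) ->
  (forall k, (a <= k < b)%N -> P k -> (c <= k < d)%N && Q k) ->
  \sum_(a <= k < b | P k) f k <= \sum_(c <= k < d | Q k) f k.
Proof.
move=> f0 PQ.
rewrite (@big_nat_widenl _ _ _ a 0 b) // (@big_nat_widen _ _ _ 0 b (b + d)) ?leq_addr //.
rewrite (@big_nat_widenl _ _ _ c 0 d) // (@big_nat_widen _ _ _ 0 d (b + d)) ?leq_addl //.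
rewrite big_mkcond [X in _ <= X]big_mkcond /=.
apply: ler_sum => k _; case E: (_ && _); last by case: ifP.
move: E => /andP[/andP[Pk ak] kb].
have /andP[/andP[ck kd] Qk] := PQ k (introT andP (conj ak kb)) Pk.
by rewrite Qk ck kd.
Qed.

Lemma sum_inv_window_ge (k K : nat) : (0 < k < K)%N ->
  1 <= 2 * \sum_(1 <= m < K | (m <= k <= 2 * m)%N) (m%:R : R)^-1.
Proof.
move=> /andP[k0 kK].
have half_k := odd_double_half k.
have kp : 0 < k%:R :> R by rewrite ltr0n.
(* the window contains the k - k./2 indices m in [uphalf k, k], each with 1/m >= 1/k *)
have sub : \sum_(uphalf k <= m < k.+1 | true) (m%:R : R)^-1 <=
           \sum_(1 <= m < K | (m <= k <= 2 * m)%N) (m%:R : R)^-1.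
  apply: ler_sum_nat_sub => [m|m]; first by rewrite invr_ge0.
  by rewrite uphalf_half => /andP[? ?] _; apply/andP; split; lia.
have lb : \sum_(uphalf k <= m < k.+1) (k%:R : R)^-1 <=
          \sum_(uphalf k <= m < k.+1 | true) (m%:R : R)^-1.
  apply: ler_sum_nat => m; rewrite uphalf_half => /andP[? ?].
  by rewrite lef_pV2 ?posrE ?ltr0n ?ler_nat//; lia.
apply: le_trans (ler_wpM2l _ (le_trans lb sub)) => //.
rewrite sumr_const_nat mulrnAr -mulr_natr mulrAC ler_pdivlMr// mul1r.
by rewrite -natrM ler_nat mulnC uphalf_half; lia.
Qed.

Lemma sum_window_weight_le (r : R) (n K : nat) : 0 < r -> (0 < n)%N ->
  \sum_(1 <= m < K | (n <= 2 * m)%N) (m%:R `^ r * m%:R : R)^-1 <=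
    (1 + r^-1) * 2 `^ r * (n%:R `^ r)^-1.
Proof.
move=> r0 n0.
have half_n := odd_double_half n.
have np : 0 < n%:R :> R by rewrite ltr0n.
have h0 : (0 < uphalf n)%N by rewrite uphalf_half; lia.
have hp : 0 < (uphalf n)%:R :> R by rewrite ltr0n.
apply: (le_trans (@ler_sum_nat_sub _ 1 K (uphalf n) K _ xpredT _ _)).
- by move=> m; rewrite invr_ge0 mulr_ge0 ?powR_ge0.
- by move=> m /andP[_ ->]; rewrite uphalf_half andbT; lia.
apply: le_trans (sum_inv_powR_nat_le r (uphalf n) K r0 h0) _.
rewrite -mulrA ler_wpM2l ?addr_ge0 ?invr_ge0 ?(ltW r0)//.
rewrite ler_pdivlMr ?powR_gt0// mulrC ler_pdivrMr ?powR_gt0//.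
rewrite -powRM ?ler0n//; apply: ge0_ler_powR; rewrite ?nnegrE ?(ltW r0) ?ler0n ?mulr_ge0//.
by rewrite -natrM ler_nat uphalf_half; lia.
Qed.

Lemma hoelder_sum {I : Type} (p q : R) (s : seq I) (a b : I -> R) :
  (forall i, 0 <= a i) -> (forall i, 0 <= b i) -> 0 < p -> 0 < q ->
  p^-1 + q^-1 = 1 ->
  \sum_(i <- s) a i * b i <=
    (\sum_(i <- s) a i `^ p) `^ p^-1 * (\sum_(i <- s) b i `^ q) `^ q^-1.
Proof.
move=> a0 b0 p0 q0 pq; elim: s => [|i s IH]; first by rewrite !big_nil mulr_ge0 ?powR_ge0.
rewrite !big_cons.
set A := \sum_(j <- s) a j `^ p in IH *; set B := \sum_(j <- s) b j `^ q in IH *.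
have A0 : 0 <= A by rewrite sumr_ge0// => j _; rewrite powR_ge0.
have B0 : 0 <= B by rewrite sumr_ge0// => j _; rewrite powR_ge0.
apply: (le_trans (lerD (lexx _) IH)).
have := @hoelder2 R (a i) (A `^ p^-1) (b i) (B `^ q^-1) p q (a0 i) (powR_ge0 _ _)
  (b0 i) (powR_ge0 _ _) p0 q0 pq.
by rewrite -!powRrM !mulVf ?gt_eqF// !powRr1.
Qed.

Lemma jensen_sum_powR {I : Type} (p : R) (s : seq I) (w x : I -> R) :
  1 < p -> (forall i, 0 <= w i) -> (forall i, 0 <= x i) ->
  (\sum_(i <- s) w i * x i) `^ p <=
    (\sum_(i <- s) w i) `^ (p - 1) * \sum_(i <- s) w i * x i `^ p.
Proof.
move=> p1 w0 x0.
have p0 : 0 < p by lra.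
set q := (1 - p^-1)^-1.
have q0 : 0 < q by rewrite invr_gt0 subr_gt0 invf_lt1.
have pq : p^-1 + q^-1 = 1 by rewrite invrK addrC subrK.
(* Hoelder applied to w^(1/p) x and w^(1/q) *)
have := @hoelder_sum I p q s (fun i => w i `^ p^-1 * x i) (fun i => w i `^ q^-1)
  (fun i => mulr_ge0 (powR_ge0 _ _) (x0 i)) (fun i => powR_ge0 _ _) p0 q0 pq.
have e1 i : w i `^ p^-1 * x i * w i `^ q^-1 = w i * x i.
  by rewrite mulrAC -powRD ?pq ?powRr1// ?pq ?oner_eq0.
have e2 i : (w i `^ p^-1 * x i) `^ p = w i * x i `^ p.
  by rewrite powRM ?powR_ge0// -powRrM mulVf ?gt_eqF// powRr1.
have e3 i : (w i `^ q^-1) `^ q = w i by rewrite -powRrM mulVf ?gt_eqF// powRr1.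
under eq_bigr do rewrite e1.
under [X in _ <= X `^ _ * _]eq_bigr do rewrite e2.
under [X in _ <= _ * X `^ _]eq_bigr do rewrite e3.
move=> h.
have S0 : 0 <= \sum_(i <- s) w i * x i by rewrite sumr_ge0// => i _; rewrite mulr_ge0.
have := @ge0_ler_powR R p (ltW p0) _ _ S0 (mulr_ge0 (powR_ge0 _ _) (powR_ge0 _ _)) h.
rewrite powRM ?powR_ge0// -!powRrM mulVf ?gt_eqF// powRr1 ?sumr_ge0// => [|i _]; last first.
  by rewrite mulr_ge0 ?powR_ge0.
have -> : q^-1 * p = p - 1 by rewrite invrK mulrBl mul1r mulVf ?gt_eqF.
by rewrite [X in _ -> _ <= X]mulrC.
Qed.
Lemma window_powR_le (p r : R) (y : nat -> R) (n K : nat) :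
  1 < p -> 0 < r -> (0 < n)%N -> (forall m, (0 < m)%N -> 0 <= y m) ->
  (\sum_(1 <= m < K | (n <= 2 * m)%N) y m / m%:R) `^ p <=
    ((1 + r^-1) * 2 `^ r) `^ (p - 1) * (n%:R `^ (r * (p - 1)))^-1 *
    \sum_(1 <= m < K | (n <= 2 * m)%N) y m `^ p * m%:R `^ (r * (p - 1) - 1).
Proof.
move=> p1 r0 n0 y0.
have pm1 : 0 < p - 1 by lra.
(* Jensen with weights m^(-r-1) and values y m * m^r over the window n <= 2m *)
set s := [seq m <- index_iota 1 K | (n <= 2 * m)%N].
set w := fun m : nat => (m%:R `^ r * m%:R : R)^-1.
set x := fun m : nat => `|y m| * m%:R `^ r.
have w0 m : 0 <= w m by rewrite invr_ge0 mulr_ge0 ?powR_ge0.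
have x0 m : 0 <= x m by rewrite mulr_ge0 ?powR_ge0.
have wxE : \sum_(1 <= m < K | (n <= 2 * m)%N) y m / m%:R = \sum_(m <- s) w m * x m.
  rewrite big_filter [LHS]big_nat_cond [RHS]big_nat_cond.
  apply: eq_bigr => m /andP[/andP[m0 _] _]; rewrite /w /x.
  have mp : 0 < m%:R :> R by rewrite ltr0n.
  have mr : m%:R `^ r != 0 by rewrite gt_eqF ?powR_gt0.
  by rewrite ger0_norm ?y0//; field; rewrite mr gt_eqF.
have wxpE : \sum_(m <- s) w m * x m `^ p =
    \sum_(1 <= m < K | (n <= 2 * m)%N) y m `^ p * m%:R `^ (r * (p - 1) - 1).
  rewrite big_filter [LHS]big_nat_cond [RHS]big_nat_cond.
  apply: eq_bigr => m /andP[/andP[m0 _] _]; rewrite /w /x.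
  have mp : 0 < m%:R :> R by rewrite ltr0n.
  rewrite ger0_norm ?y0// powRM ?powR_ge0 ?y0// -powRrM mulrCA; congr (_ * _).
  rewrite -{2}(powRr1 (ltW mp)) -powRD; last by rewrite (gt_eqF mp) implybT.
  rewrite -powRN -powRD; last by rewrite (gt_eqF mp) implybT.
  by congr (_ `^ _); ring.
have w_le : \sum_(m <- s) w m <= (1 + r^-1) * 2 `^ r * (n%:R `^ r)^-1.
  by rewrite big_filter; apply: sum_window_weight_le.
rewrite wxE; apply: (le_trans (jensen_sum_powR p s w x p1 w0 x0)).
rewrite wxpE; apply: ler_wpM2r.
  by rewrite sumr_ge0// => m _; rewrite mulr_ge0 ?powR_ge0.
apply: (le_trans (ge0_ler_powR (ltW pm1) _ _ w_le)); rewrite ?nnegrE ?sumr_ge0//.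
  by rewrite !mulr_ge0 ?invr_ge0 ?powR_ge0// addr_ge0// invr_ge0 ltW.
rewrite powRM ?invr_ge0 ?powR_ge0 ?mulr_ge0 ?addr_ge0 ?invr_ge0 ?(ltW r0)//.
by rewrite -[(n%:R `^ r)^-1]powR_inv1 ?powR_ge0// -!powRrM mulN1r mulrN powRN.
Qed.

End FiniteSums.

Section SeriesBounds.
Context {R : realType}.
Local Open Scope ereal_scope.

Lemma poweR_nneseries_le (d g : nat -> R) (p C : R) (n j : nat) :
  (0 < p)%R -> (0 <= C)%R -> (forall k, 0 <= d k)%R -> (forall m, 0 <= g m)%R ->
  (forall K, (\sum_(n <= k < K) d k) `^ p <= C * \sum_(j <= m < K) g m)%R ->
  poweR (\sum_(n <= k <oo) (d k)%:E) p <= C%:E * \sum_(j <= m <oo) (g m)%:E.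
Proof.
move=> p0 C0 d0 g0 partial.
set G := \sum_(j <= m <oo) (g m)%:E.
have G0 : 0 <= G by apply: nneseries_ge0 => m _ _; rewrite lee_fin.
have CG0 : 0 <= C%:E * G by rewrite mule_ge0.
set D := \sum_(n <= k <oo) (d k)%:E.
have D0 : 0 <= D by apply: nneseries_ge0 => m _ _; rewrite lee_fin.
suff D_le : D <= poweR (C%:E * G) p^-1.
  have := @gt0_ler_poweR R p (ltW p0) D (poweR (C%:E * G) p^-1).
  rewrite !in_itv /= !leey D0 poweR_ge0 => /(_ isT isT D_le).
  by rewrite -poweRrM mulVf ?gt_eqF// poweRe1.
apply: lime_le; first by apply: is_cvg_nneseries => k _ _; rewrite lee_fin.
apply: nearW => K; rewrite sumEFin.
set DK := (\sum_(n <= k < K) d k)%R; set GK := (\sum_(j <= m < K) g m)%R.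
have DK0 : (0 <= DK)%R by rewrite sumr_ge0.
have GK0 : (0 <= GK)%R by rewrite sumr_ge0.
have DK_le : (DK <= (C * GK) `^ p^-1)%R.
  rewrite -(powRr1 DK0) -(mulfV (lt0r_neq0 p0)) powRrM.
  by apply: ge0_ler_powR; rewrite ?nnegrE ?invr_ge0 ?powR_ge0 ?mulr_ge0 ?(ltW p0) ?partial.
apply: (le_trans (y := poweR (C * GK)%:E p^-1)); first by rewrite poweR_EFin lee_fin.
have CGK_le : (C * GK)%:E <= C%:E * G.
  rewrite EFinM lee_wpmul2l ?lee_fin// /GK -sumEFin.
  by apply: nneseries_lim_ge => m _ _; rewrite lee_fin.
have pi0 : (0 <= p^-1)%R by rewrite invr_ge0 ltW.
have := @gt0_ler_poweR R p^-1 pi0 ((C * GK)%:E) (C%:E * G).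
by rewrite !in_itv /= !leey CG0 lee_fin mulr_ge0// => /(_ isT isT CGK_le).
Qed.

Lemma window_powR_series_le (b : R) (m : nat) : (0 < b)%R ->
  \sum_(1 <= n <oo) (if (n <= 2 * m)%N then n%:R `^ (b - 1) else 0)%R%:E <=
    ((1 + b^-1) * 2 `^ b * m%:R `^ b)%R%:E.
Proof.
move=> b0.
rewrite (nneseries_split 1 (2 * m)); last first.
  by move=> k _; rewrite lee_fin; case: ifP => // _; rewrite powR_ge0.
rewrite [X in _ + X]eseries0 ?adde0; last by move=> k k2m _; case: ifP => //; lia.
rewrite sumEFin add1n lee_fin.
rewrite (@eq_big_nat _ _ _ _ _ _ (fun n => n%:R `^ (b - 1))%R); last first.
  by move=> k /andP[_ k2m]; rewrite ifT//; lia.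
by rewrite -mulrA -powRM ?ler0n// -natrM; apply: sum_powR_nat_le.
Qed.

End SeriesBounds.

Definition tail_const {R : realType} (p b M : R) : R :=
  (2 * M) `^ p * ((1 + (b / (p - 1))^-1) * 2 `^ (b / (p - 1))) `^ (p - 1).

Section GBVTail.
Context {R : realType} {lam : nat -> R} {M : R}.
Hypotheses (M_ge0 : 0 <= M) (lam_ge0 : forall m, (0 < m)%N -> 0 <= lam m).
Hypothesis lam_window : forall m, (0 < m)%N ->
  \sum_(m <= k < (2 * m).+1) `|lam k - lam k.+1| <= M * lam m.

Lemma tail_le_window_sum (n K : nat) : (0 < n)%N ->
  \sum_(n <= k < K) `|lam k - lam k.+1| <=
    2 * M * \sum_(1 <= m < K | (n <= 2 * m)%N) lam m / m%:R.
Proof.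
move=> n0.
set S := fun k => \sum_(1 <= m < K | (m <= k <= 2 * m)%N) (m%:R : R)^-1.
have cover : \sum_(n <= k < K) `|lam k - lam k.+1| <=
    2 * \sum_(n <= k < K) `|lam k - lam k.+1| * S k.
  rewrite mulr_sumr; apply: ler_sum_nat => k /andP[nk kK].
  rewrite mulrCA ler_peMr//; apply: sum_inv_window_ge; apply/andP; split; lia.
apply: (le_trans cover); rewrite -mulrA ler_wpM2l//.
have -> : \sum_(n <= k < K) `|lam k - lam k.+1| * S k =
    \sum_(1 <= m < K) \sum_(n <= k < K | (m <= k <= 2 * m)%N) `|lam k - lam k.+1| / m%:R.
  under eq_bigr do rewrite /S mulr_sumr big_mkcond.
  by rewrite exchange_big_nat; apply: eq_bigr => m _; rewrite [RHS]big_mkcond.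
rewrite [X in _ <= _ * X]big_mkcond /= mulr_sumr; apply: ler_sum_nat => m /andP[m0 _].
case: ifP => nm; last first.
  rewrite mulr0 big1_seq// => k /andP[/andP[_ km]]; rewrite mem_index_iota.
  by move=> /andP[nk _]; exfalso; move/negbT: nm; lia.
rewrite -mulr_suml mulrA; apply: ler_wpM2r; first by rewrite invr_ge0.
apply: le_trans (lam_window m m0).
apply: ler_sum_nat_sub => // k /andP[nk kK] /andP[mk km].
by apply/andP; split => //; apply/andP; split => //; lia.
Qed.

Lemma tail_powR_le (p b : R) (n K : nat) : 1 < p -> 0 < b -> (0 < n)%N ->
  (\sum_(n <= k < K) `|lam k - lam k.+1|) `^ p <=
    tail_const p b M * (n%:R `^ b)^-1 *
    \sum_(1 <= m < K | (n <= 2 * m)%N) lam m `^ p * m%:R `^ (b - 1).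
Proof.
move=> p1 b0 n0.
have p0 : 0 < p by lra.
have r0 : 0 < b / (p - 1) by rewrite divr_gt0//; lra.
have rp : b / (p - 1) * (p - 1) = b by rewrite mulfVK// gt_eqF//; lra.
have S0 : 0 <= \sum_(1 <= m < K | (n <= 2 * m)%N) lam m / m%:R.
  rewrite big_nat_cond sumr_ge0// => m /andP[/andP[m0 _] _].
  by rewrite mulr_ge0 ?invr_ge0 ?lam_ge0.
have := tail_le_window_sum n K n0 => /(ge0_ler_powR (ltW p0)).
rewrite !nnegrE sumr_ge0 ?mulr_ge0// => /(_ isT isT) /le_trans; apply.
rewrite powRM ?mulr_ge0// /tail_const -!mulrA ler_wpM2l ?powR_ge0//.
by have := window_powR_le p (b / (p - 1)) lam n K p1 r0 n0 lam_ge0; rewrite rp mulrA.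
Qed.

Lemma poweR_tail_le (p b : R) (n : nat) : 1 < p -> 0 < b -> (0 < n)%N ->
  (poweR (\sum_(n <= k <oo) (`|lam k - lam k.+1|)%:E) p <=
    (tail_const p b M * (n%:R `^ b)^-1)%:E *
    \sum_(1 <= m <oo)
      (if (n <= 2 * m)%N then lam m `^ p * m%:R `^ (b - 1) else 0)%:E)%E.
Proof.
move=> p1 b0 n0; apply: poweR_nneseries_le.
- lra.
- by rewrite mulr_ge0 ?invr_ge0 ?powR_ge0// mulr_ge0 ?powR_ge0.
- by move=> k; apply: normr_ge0.
- by move=> m; case: ifP => // _; rewrite mulr_ge0 ?powR_ge0.
- by move=> K; rewrite -big_mkcond; apply: tail_powR_le.
Qed.

Lemma window_column_le (p b : R) (m : nat) : 0 < b -> (0 < m)%N ->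
  (\sum_(n <oo | (1 <= n)%N)
      (n%:R `^ (b + b - 1) * (tail_const p b M * (n%:R `^ b)^-1) *
       (if (n <= 2 * m)%N then lam m `^ p * m%:R `^ (b - 1) else 0))%:E
   <= (tail_const p b M * ((1 + b^-1) * 2 `^ b))%:E *
      ((m%:R `^ (b + b - 1))%:E * (lam m `^ p)%:E))%E.
Proof.
move=> b0 m0.
have mp : 0 < m%:R :> R by rewrite ltr0n.
set c := tail_const p b M * (lam m `^ p * m%:R `^ (b - 1)).
have c0 : 0 <= c by rewrite !mulr_ge0 ?powR_ge0.
have -> : (\sum_(n <oo | (1 <= n)%N)
      (n%:R `^ (b + b - 1) * (tail_const p b M * (n%:R `^ b)^-1) *
       (if (n <= 2 * m)%N then lam m `^ p * m%:R `^ (b - 1) else 0))%:E =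
    c%:E * \sum_(1 <= n <oo) (if (n <= 2 * m)%N then n%:R `^ (b - 1) else 0)%:E)%E.
  rewrite -nneseriesZl; last by move=> n _; rewrite lee_fin; case: ifP => // _; rewrite powR_ge0.
  rewrite ereal_series; apply: eq_eseriesr => n n1; rewrite -EFinM; congr (_%:E).
  case: ifP => _; last by rewrite !mulr0.
  have np : 0 < n%:R :> R by rewrite ltr0n.
  have -> : n%:R `^ (b - 1) = n%:R `^ (b + b - 1) * (n%:R `^ b)^-1.
    by rewrite -powRB ?(gt_eqF np) ?implybT//; congr (_ `^ _); ring.
  by rewrite /c; ring.
apply: (le_trans (lee_wpmul2l _ (window_powR_series_le b m b0))); first by rewrite lee_fin.
rewrite -!EFinM lee_fin le_eqVlt; apply/orP; left; apply/eqP.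
have -> : m%:R `^ (b + b - 1) = m%:R `^ (b - 1) * m%:R `^ b.
  by rewrite -powRD ?(gt_eqF mp) ?implybT//; congr (_ `^ _); ring.
by rewrite /c; ring.
Qed.

Lemma weighted_tail_series_le (p b : R) : 1 < p -> 0 < b ->
  (\sum_(1 <= n <oo)
      ((n%:R `^ (b + b - 1))%:E *
       poweR (\sum_(n <= k <oo) (`|lam k - lam k.+1|)%:E) p)
   <= (tail_const p b M * ((1 + b^-1) * 2 `^ b))%:E *
      \sum_(1 <= n <oo) ((n%:R `^ (b + b - 1))%:E * (lam n `^ p)%:E))%E.
Proof.
move=> p1 b0.
set K1 := tail_const p b M.
set g := fun n m : nat =>
  if (n <= 2 * m)%N then lam m `^ p * m%:R `^ (b - 1) else 0.
set F := fun n m : nat => n%:R `^ (b + b - 1) * (K1 * (n%:R `^ b)^-1) * g n m.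
have F0 n m : 0 <= F n m.
  by rewrite /F /g !mulr_ge0 ?powR_ge0 ?invr_ge0//; case: ifP; rewrite ?mulr_ge0 ?powR_ge0.
have by_rows : (\sum_(1 <= n <oo)
      ((n%:R `^ (b + b - 1))%:E * poweR (\sum_(n <= k <oo) (`|lam k - lam k.+1|)%:E) p)
    <= \sum_(n <oo | (1 <= n)%N) \sum_(m <oo | (1 <= m)%N) (F n m)%:E)%E.
  rewrite ereal_series; apply: lee_nneseries => [n _ _|n n1].
    by rewrite mule_ge0 ?poweR_ge0// lee_fin powR_ge0.
  rewrite -ereal_series (eq_eseriesr (fun m _ => EFinM _ (g n m))) nneseriesZl; last first.
    by move=> m _; rewrite lee_fin /g; case: ifP; rewrite ?mulr_ge0 ?powR_ge0.
  rewrite EFinM -muleA; apply: lee_wpmul2l; first by rewrite lee_fin powR_ge0.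
  exact: poweR_tail_le.
apply: (le_trans by_rows).
rewrite nneseries_interchange; last by move=> n m; rewrite lee_fin.
rewrite -nneseriesZl; last by move=> n _; rewrite -EFinM lee_fin mulr_ge0 ?powR_ge0.
rewrite ereal_series; apply: lee_nneseries => [m _ _|m m1].
  by apply: nneseries_ge0 => n _ _; rewrite lee_fin.
exact: window_column_le.
Qed.

End GBVTail.

Theorem mainTheorem6 (R : realType) (p gamma : R) :
  1 < p -> p^-1 - 1 < gamma -> gamma < p^-1 ->
  forall M : R, 0 < M ->
  exists C : R, 0 < C /\
    forall lambda : nat -> R, GBV_with lambda M ->
      (\sum_(1 <= n <oo)
          (((n%:R : R) `^ (p + p * gamma - 2))%:E *
           poweR (\sum_(n <= k <oo) (`|lambda k - lambda k.+1|)%:E) p)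
       <= C%:E * \sum_(1 <= n <oo)
          (((n%:R : R) `^ (p + p * gamma - 2))%:E *
           ((lambda n) `^ p)%:E))%E.
Proof.
move=> p1 gamma_gt _ M M0.
have p0 : 0 < p by lra.
set b := (p + p * gamma - 1) / 2.
have b0 : 0 < b.
  have : p * (p^-1 - 1) < p * gamma by rewrite ltr_pM2l.
  by rewrite mulrBr mulfV ?gt_eqF// mulr1 => pgamma; rewrite divr_gt0//; lra.
have -> : p + p * gamma - 2 = b + b - 1 by rewrite /b; field.
exists (tail_const p b M * ((1 + b^-1) * 2 `^ b)); split.
  have r0 : 0 < b / (p - 1) by rewrite divr_gt0//; lra.
  have const_gt0 (x : R) : 0 < x -> 0 < (1 + x^-1) * 2 `^ x.
    by move=> x0; rewrite mulr_gt0 ?powR_gt0// addr_gt0// invr_gt0.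
  apply: mulr_gt0; last exact: const_gt0.
  by rewrite /tail_const mulr_gt0 ?powR_gt0 ?const_gt0// mulr_gt0.
move=> lam [lam_ge0 _ lam_window].
exact: (weighted_tail_series_le (ltW M0) lam_ge0 lam_window _ _ p1 b0).
Qed.
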